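(* Let $m\in M^\oplus$, $P=P(m)$, $d\in N^\oplus$ and $\theta\in M_{\mathbb{R}}$. A $P$-framed representation $\nu:P\to E$ of $(Q,I)$ with $d(E)=d$, viewed as a representation of $(Q^\star,I^\star)$ of dimension vector $d^\star$ (with $\mathbb{C}$ at $\star$ and the arrows out of $\star$ given by $\nu$), is $(\theta-\epsilon\delta)^\star$-semistable for all sufficiently small $\epsilon>0$ (i.e. defines a point of $F(d,m,\theta)$) if and only if (a) $E\in\mathcal{F}(\theta)$ and (b) $\mathrm{coker}(\nu)\in\mathcal{T}(\theta)$.
   Context: $Q$ is a quiver with finite vertex set $V(Q)$, $I\subset\mathbb{C}Q$ a two-sided ideal spanned by combinations of paths of length $\ge2$, $\mathcal{A}=\mathrm{rep}(Q,I)$ the finite-dimensional $\mathbb{C}Q/I$-modules. $N=\mathbb{Z}^{V(Q)}$ with basis $(e_i)$, $N^\oplus$ non-negative vectors, $M=\mathrm{Hom}(N,\mathbb{Z})$, $M_{\mathbb{R}}=M\otimes\mathbb{R}$, $\delta\in M$ with $\delta(e_i)=1$, $M^\oplus=\{0\}\cup\{m:m(n)>0$ for all nonzero $n\in N^\oplus\}$. $\theta(E)=\theta(d(E))$ for dimension vectors $d(E)$. $\mathcal{T}(\theta)$ (resp. $\mathcal{F}(\theta)$) is the full subcategory of $E\in\mathcal{A}$ all of whose quotients $Q$ satisfy $\theta(Q)>0$ (resp. all of whose subobjects $A$ satisfy $\theta(A)\le0$). $P_i=(\mathbb{C}Q/I)\epsilon_i$ for the vertex idempotent $\epsilon_i$,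 $P(m)=\bigoplus_iP_i^{m(e_i)}$; a $P$-framed representation is $E\in\mathcal{A}$ with a module map $\nu:P\to E$, which is the same as choosing $m(e_i)$ vectors in $E_i$ for each $i$. $Q^\star$ adds a vertex $\star$ and $m(e_i)$ arrows $\star\to i$; $I^\star$ is generated by $I$. $d^\star=(d,1)\in N\oplus\mathbb{Z}$, and for $\eta\in M_{\mathbb{R}}$, $\eta^\star=(\eta,-\eta(d))$. A representation $E^\star$ of $(Q^\star,I^\star)$ is $\eta^\star$-semistable if $\eta^\star(E^\star)=0$ and every subrepresentation $A^\star$ has $\eta^\star(A^\star)\le0$. $F(d,m,\theta)$ denotes the moduli scheme $M^{ss}(d^\star,(\theta-\epsilon\delta)^\star)$ for $0<\epsilon\ll1$. *)

From HB Require Import structures.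
From mathcomp Require Import all_boot all_order all_algebra.
From mathcomp Require Import reals.
From mathcomp Require Import complex.

Set Implicit Arguments.
Unset Strict Implicit.
Unset Printing Implicit Defensive.
Import Order.TTheory GRing.Theory Num.Theory.
Local Open Scope ring_scope.

(* Representations of a quiver (vertices V : finType, arrows A with src/tgt)
   over a field C: vertex i carries the row space 'rV[C]_(dv i); an arrow a
   acts by right multiplication with rho a : 'M_(dv (src a), dv (tgt a)). *)
Section QuiverReps.
Variables (C : fieldType) (V : finType) (A : Type) (src tgt : A -> V).

Section Rep.
Variables (dv : V -> nat) (rho : forall a : A, 'M[C]_(dv (src a), dv (tgt a))).

(* subrepresentation: a family of subspaces U i of C^(dv i) (row spaces of
   the square matrices U i) stable under all arrows *)
Definition subrep (U : forall i : V, 'M[C]_(dv i)) : Prop :=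
  forall a : A, (U (src a) *m rho a <= U (tgt a))%MS.

Definition dimsub (U : forall i : V, 'M[C]_(dv i)) : V -> nat :=
  fun i => \rank (U i).

Definition arrow_mx (i k : V) (a : A) : 'M[C]_(dv i, dv k) :=
  \matrix_(x, y)
    (if (src a == i) && (tgt a == k) then
       match (insub (val x) : option 'I_(dv (src a))),
             (insub (val y) : option 'I_(dv (tgt a))) with
       | Some x', Some y' => rho a x' y'
       | _, _ => 0
       end
     else 0).

Definition idpath_mx (i j : V) : 'M[C]_(dv i, dv j) :=
  \matrix_(x, y) ((i == j) && (val x == val y))%:R.

(* action of the path p = [:: a1; ...; an] (a1 traversed first) from i to j *)
Fixpoint path_mx (i j : V) (p : seq A) : 'M[C]_(dv i, dv j) :=
  match p with
  | [::] => idpath_mx i j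
  | a :: p' => \sum_(k : V) arrow_mx i k a *m path_mx k j p'
  end.

(* an element of CQ, as a finite linear combination of paths, annihilates the
   representation *)
Definition kills (r : seq (C * seq A)) : Prop :=
  forall i j : V, \sum_(t <- r) t.1 *: path_mx i j t.2 = 0.

Definition satisfies (I : seq (C * seq A) -> Prop) : Prop :=
  forall r, I r -> kills r.

End Rep.

Definition admissible_rel (I : seq (C * seq A) -> Prop) : Prop :=
  forall r, I r -> all (fun t => 1 < size t.2)%N r.

End QuiverReps.

Section Stability.
Variable R : realType.

Definition pairing (V : finType) (theta : V -> R) (n : V -> nat) : R :=
  \sum_(i : V) theta i * (n i)%:R.

Definition semistable (C : fieldType) (V : finType) (A : Type) (src tgt : A -> V)
  (eta : V -> R) (dv : V -> nat) (rho : forall a, 'M[C]_(dv (src a), dv (tgt a)))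
  : Prop :=
  pairing eta dv = 0 /\
  forall U : forall i, 'M[C]_(dv i),
    subrep rho U -> pairing eta (dimsub U) <= 0.

Definition in_F (C : fieldType) (V : finType) (A : Type) (src tgt : A -> V)
  (theta : V -> R) (dv : V -> nat) (rho : forall a, 'M[C]_(dv (src a), dv (tgt a)))
  : Prop :=
  forall U : forall i, 'M[C]_(dv i),
    subrep rho U -> pairing theta (dimsub U) <= 0.

Definition Mplus (V : finType) (m : V -> int) : Prop :=
  (forall i, m i = 0) \/
  (forall n : V -> nat, (exists i, n i <> 0%N) ->
     0 < \sum_(i : V) m i * (n i)%:Z).

Definition delta (V : finType) : V -> R := fun _ => 1.

End Stability.

Section Framed.
Variables (V : finType) (A : Type) (src tgt : A -> V) (m : V -> int).

(* multiplicity m(e_i) of P_i in P(m) *)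
Definition mult (i : V) : nat := `|m i|%N.

(* arrows of Q^star: those of Q plus m(e_i) arrows star -> i *)
Definition starA : Type := (A + {i : V & 'I_(mult i)})%type.

(* vertices of Q^star: Some i for i in V, None = star *)
Definition srcS (b : starA) : option V :=
  match b with inl a => Some (src a) | inr s => None end.
Definition tgtS (b : starA) : option V :=
  match b with inl a => Some (tgt a) | inr s => Some (projT1 s) end.

Definition dstar (d : V -> nat) (o : option V) : nat :=
  match o with Some i => d i | None => 1%N end.

Definition etastar (R : realType) (eta : V -> R) (d : V -> nat) (o : option V) : R :=
  match o with Some i => eta i | None => - pairing eta d end.

(* E^star: the framed representation nu : P(m) -> E, where nu i is the
   mult i x d i matrix whose rows are the m(e_i) chosen vectors in E_i,
   viewed as a representation of Q^star with C at star *)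
Definition rhostar (C : fieldType) (d : V -> nat)
  (rho : forall a, 'M[C]_(d (src a), d (tgt a)))
  (nu : forall i, 'M[C]_(mult i, d i)) :
  forall b : starA, 'M[C]_(dstar d (srcS b), dstar d (tgtS b)) :=
  fun b => match b as b0 return 'M[C]_(dstar d (srcS b0), dstar d (tgtS b0)) with
           | inl a => rho a
           | inr s => row (projT2 s) (nu (projT1 s))
           end.

(* coker(nu) in T(theta): every nonzero quotient of coker(nu) has theta > 0.
   Quotients of coker(nu) = E / im(nu) are the E / W for subrepresentations
   W of E containing im(nu), i.e. containing all framing vectors; the quotient
   is nonzero iff W <> E, and d(E/W) = d - d(W). *)
Definition coker_in_T (C : fieldType) (R : realType) (theta : V -> R)
  (d : V -> nat) (rho : forall a, 'M[C]_(d (src a), d (tgt a)))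
  (nu : forall i, 'M[C]_(mult i, d i)) : Prop :=
  forall W : forall i, 'M[C]_(d i),
    subrep rho W ->
    (forall i, (nu i <= W i)%MS) ->
    (exists i, \rank (W i) <> d i) ->
    0 < pairing theta (fun i => (d i - \rank (W i))%N).

End Framed.

From HB Require Import structures.
From mathcomp Require Import all_boot all_order all_algebra.
From mathcomp Require Import reals.
From mathcomp Require Import complex.
From mathcomp Require Import lra.

Set Implicit Arguments.
Unset Strict Implicit.
Unset Printing Implicit Defensive.
Import Order.TTheory GRing.Theory Num.Theory.
Local Open Scope ring_scope.
Local Open Scope complex_scope.

(* A subrepresentation of E^star has dimension 0 or 1 at star.  If it is 0, it
   is a subrepresentation U of E and eta^star(U^star) = eta(U); if it is 1, it
   is a subrepresentation W of E containing the framing vectors and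
   eta^star(W^star) = -eta(d - d(W)).  So eta^star-semistability says that E is
   in F(eta) and that eta >= 0 on the quotients of coker(nu).  For
   eta = theta - eps delta with eps > 0 small, the first condition is
   equivalent to E in F(theta) since -eps delta(U) -> 0, and the second to
   coker(nu) in T(theta): a quotient of dimension n <> 0 has
   theta(n) >= eps delta(n) > 0, and conversely theta takes only finitely many
   values on the dimension vectors bounded by d, so theta(n) > 0 forces
   theta(n) >= mu > eps delta(d) once eps is small enough. *)

Lemma big_option (R : nmodType) (V : finType) (f : option V -> R) :
  \sum_(o : option V) f o = f None + \sum_(i : V) f (Some i).
Proof.
rewrite (bigD1 None) //=; congr (_ + _).
rewrite (reindex_omap Some id) //=; last by case.
by apply: eq_bigl => i; rewrite eqxx.
Qed.

Lemma le0_of_le_small_mul (R : realFieldType) (e0 x k : R) : 0 < e0 ->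
  (forall eps, 0 < eps -> eps < e0 -> x <= eps * k) -> x <= 0.
Proof.
move=> e0_gt0 le_x; apply/ler_addgt0Pr => e e_gt0; rewrite add0r.
pose eps := Num.min (e0 / 2) (e / (`|k| + 1)).
have k1_gt0 : 0 < `|k| + 1 by rewrite ltr_wpDl.
have eps_gt0 : 0 < eps by rewrite lt_min !divr_gt0.
have eps_lt : eps < e0 by rewrite gt_min; apply/orP; left; lra.
have eps_le : eps * (`|k| + 1) <= e.
  by rewrite -ler_pdivlMr // ge_min lexx orbT.
have := ler_wpM2l (ltW eps_gt0) (ler_norm k).
have := le_x eps eps_gt0 eps_lt; nra.
Qed.

Lemma finite_pos_gap (R : realDomainType) (I : finType) (F : I -> R) :
  exists2 mu, 0 < mu & forall i, 0 < F i -> mu <= F i.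
Proof.
exists (\big[Num.min/1]_(i | 0 < F i) F i); last by move=> i F_gt0; exact: bigmin_le_cond.
by apply/bigmin_gtP; split.
Qed.

Section Pairing.
Context {R : realType} (V : finType).
Implicit Types (theta eta : V -> R) (d n : V -> nat).

Definition perturb (theta : V -> R) (eps : R) : V -> R :=
  fun j => theta j - eps * delta R j.

Lemma pairing_perturb theta eps n :
  pairing (perturb theta eps) n = pairing theta n - eps * pairing (@delta R V) n.
Proof.
rewrite /pairing mulr_sumr -sumrB; apply: eq_bigr => i _.
by rewrite mulrBl mulrA.
Qed.

Lemma pairingB eta d n : (forall i, n i <= d i)%N ->
  pairing eta d - pairing eta n = pairing eta (fun i => d i - n i)%N.
Proof.
move=> le_nd; rewrite /pairing -sumrB; apply: eq_bigr => i _.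
by rewrite natrB // mulrBr.
Qed.

Lemma pairing_delta_ge0 n : 0 <= pairing (@delta R V) n.
Proof. by apply: sumr_ge0 => i _; rewrite mul1r ler0n. Qed.

Lemma pairing_delta_gt0 n : (exists i, n i <> 0%N) -> 0 < pairing (@delta R V) n.
Proof.
move=> [i0 /eqP n_i0]; rewrite /pairing (bigD1 i0) //= mul1r.
rewrite ltr_wpDr ?ltr0n ?lt0n //; apply: sumr_ge0 => j _.
by rewrite mul1r ler0n.
Qed.

Lemma ler_pairing_delta d n : (forall i, n i <= d i)%N ->
  pairing (@delta R V) n <= pairing (@delta R V) d.
Proof. by move=> le_nd; apply: ler_sum => i _; rewrite !mul1r ler_nat. Qed.

Lemma pairing_etastar eta d (n : option V -> nat) :
  pairing (etastar eta d) n =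
  pairing eta (fun i => n (Some i)) - (n None)%:R * pairing eta d.
Proof. by rewrite /pairing big_option /= addrC mulNr mulrC. Qed.

Lemma pairing_pos_gap theta d : exists2 mu, 0 < mu &
  forall n, (forall i, n i <= d i)%N -> 0 < pairing theta n -> mu <= pairing theta n.
Proof.
pose D := (\max_i d i)%N.
have [mu mu_gt0 gap] :=
  finite_pos_gap (fun f : {ffun V -> 'I_D.+1} => pairing theta (fun i => f i)).
exists mu => // n le_nd; pose f : {ffun V -> 'I_D.+1} := [ffun i => inord (n i)].
suff -> : pairing theta n = pairing theta (fun i => f i) by exact: gap.
apply: eq_bigr => i _; rewrite ffunE inordK // ltnS.
exact: leq_trans (le_nd i) (leq_bigmax i).
Qed.

End Pairing.

Section StarRepresentation.
Variables (C : fieldType) (V : finType) (A : Type) (src tgt : A -> V).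
Variables (m : V -> int) (d : V -> nat).
Variables (rho : forall a : A, 'M[C]_(d (src a), d (tgt a))).
Variables (nu : forall i : V, 'M[C]_(mult m i, d i)).

Definition star_ext (U : forall i, 'M[C]_(d i)) (S : 'M[C]_1) :
    forall o, 'M[C]_(dstar d o) :=
  fun o => if o is Some i then U i else S.

Lemma subrep_star_ext0 U : subrep rho U -> subrep (rhostar rho nu) (star_ext U 0).
Proof. by move=> subU [a|[i k]] /=; rewrite ?mul0mx ?sub0mx ?subU. Qed.

Lemma subrep_star_ext1 W : subrep rho W -> (forall i, (nu i <= W i)%MS) ->
  subrep (rhostar rho nu) (star_ext W 1%:M).
Proof.
move=> subW nuW [a|[i k]] /=; first exact: subW.
by rewrite mul1mx; apply: submx_trans (row_sub k (nu i)) (nuW i).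
Qed.

Lemma subrep_star_restr U : subrep (rhostar rho nu) U ->
  subrep rho (fun i => U (Some i)).
Proof. by move=> subU a; exact: subU (inl a). Qed.

Lemma subrep_star_frame U : subrep (rhostar rho nu) U -> row_full (U None) ->
  forall i, (nu i <= U (Some i))%MS.
Proof.
move=> subU fullU i; apply/row_subP => k; apply: submx_trans (subU (inr (Tagged _ k))).
by rewrite /= -{1}(mul1mx (row k (nu i))) submxMr // submx_full.
Qed.

Variable R : realType.

Definition coker_quot_ge0 (eta : V -> R) : Prop :=
  forall W : forall i, 'M[C]_(d i), subrep rho W -> (forall i, (nu i <= W i)%MS) ->
    0 <= pairing eta (fun i => d i - \rank (W i))%N.

Lemma star_semistableP (eta : V -> R) :
  semistable (etastar eta d) (rhostar rho nu) <->
  in_F eta rho /\ coker_quot_ge0 eta.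
Proof.
have le_rank W i : (\rank (W i : 'M[C]_(d i)) <= d i)%N by exact: rank_leq_col.
split=> [[_ ss] | [inF ge0]].
  split=> [U subU | W subW nuW].
    have := ss _ (subrep_star_ext0 subU).
    by rewrite pairing_etastar /dimsub /= mxrank0 mulr0n mul0r subr0.
  have := ss _ (subrep_star_ext1 subW nuW).
  by rewrite pairing_etastar /dimsub /= mxrank1 mul1r subr_le0 -subr_ge0 pairingB.
split=> [|U subU]; first by rewrite pairing_etastar /= mul1r subrr.
rewrite pairing_etastar /dimsub /=.
have : (\rank (U None) <= 1)%N by exact: rank_leq_col.
rewrite leq_eqVlt ltnS leqn0 => /orP [/eqP rank1 | /eqP ->].
  have nuU := subrep_star_frame subU (introT eqP rank1).
  rewrite rank1 mul1r subr_le0 -subr_ge0 pairingB; last exact: le_rank.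
  exact: ge0 (subrep_star_restr subU) nuU.
by rewrite mulr0n mul0r subr0; exact: inF (subrep_star_restr subU).
Qed.

Lemma in_F_perturb (theta : V -> R) eps : 0 <= eps ->
  in_F theta rho -> in_F (perturb theta eps) rho.
Proof.
move=> eps_ge0 inF U subU; rewrite pairing_perturb subr_le0.
exact: le_trans (inF U subU) (mulr_ge0 eps_ge0 (pairing_delta_ge0 _)).
Qed.

Lemma in_F_of_perturb (theta : V -> R) e0 : 0 < e0 ->
  (forall eps, 0 < eps -> eps < e0 -> in_F (perturb theta eps) rho) ->
  in_F theta rho.
Proof.
move=> e0_gt0 inF U subU.
apply: (le0_of_le_small_mul (k := pairing (@delta R V) (dimsub U)) e0_gt0).
move=> eps eps_gt0 eps_lt.
by have := inF eps eps_gt0 eps_lt U subU; rewrite pairing_perturb subr_le0.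
Qed.

Lemma coker_in_T_of_perturb (theta : V -> R) eps : 0 < eps ->
  coker_quot_ge0 (perturb theta eps) -> coker_in_T theta rho nu.
Proof.
move=> eps_gt0 ge0 W subW nuW [i0 /eqP rank_i0]; have := ge0 W subW nuW.
rewrite pairing_perturb subr_ge0; apply: lt_le_trans.
rewrite mulr_gt0 // pairing_delta_gt0 //; exists i0; apply/eqP.
by rewrite subn_eq0 -ltnNge ltn_neqAle rank_i0 rank_leq_col.
Qed.

Lemma coker_quot_ge0_perturb (theta : V -> R) : coker_in_T theta rho nu ->
  exists2 e0, 0 < e0 &
    forall eps, 0 <= eps -> eps < e0 -> coker_quot_ge0 (perturb theta eps).
Proof.
move=> inT; have [mu mu_gt0 gap] := pairing_pos_gap theta d.
have dd1_gt0 := ltr_wpDl (pairing_delta_ge0 d) (@ltr01 R).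
exists (mu / (pairing (@delta R V) d + 1)); first by rewrite divr_gt0.
move=> eps eps_ge0 eps_lt W subW nuW; rewrite pairing_perturb subr_ge0.
have le_rank i : (d i - \rank (W i) <= d i)%N by exact: leq_subr.
have le_delta := ler_pairing_delta (R := R) le_rank.
have [/existsP [i0 /eqP rank_i0] | /existsPn full] :=
  boolP [exists i, \rank (W i) != d i].
  have := gap _ le_rank (inT W subW nuW (ex_intro _ i0 rank_i0)).
  have : eps * (pairing (@delta R V) d + 1) < mu by rewrite -ltr_pdivlMr.
  have := ler_wpM2l eps_ge0 le_delta.
  nra.
have no_quot i : (d i - \rank (W i))%N = 0%N by rewrite (eqP (negPn (full i))) subnn.
by rewrite /pairing !big1 ?mulr0 // => i _; rewrite no_quot mulr0.
Qed.

End StarRepresentation.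

Theorem mainTheorem12 (R : realType) (V : finType) (A : Type) (src tgt : A -> V)
  (I : seq (R[i] * seq A) -> Prop) (hI : admissible_rel I)
  (m : V -> int) (hm : Mplus m) (d : V -> nat) (theta : V -> R)
  (rho : forall a : A, 'M[R[i]]_(d (src a), d (tgt a)))
  (hE : satisfies rho I)
  (nu : forall i : V, 'M[R[i]]_(mult m i, d i)) :
  (exists eps0 : R, 0 < eps0 /\
     forall eps : R, 0 < eps -> eps < eps0 ->
       semistable (etastar (fun j => theta j - eps * delta R j) d)
                  (rhostar rho nu))
  <-> (in_F theta rho /\ coker_in_T theta rho nu).
Proof.
split=> [[e0 [e0_gt0 ss]] | [inF inT]].
  have star_ss eps eps_gt0 eps_lt :=
    (star_semistableP rho nu (perturb theta eps)).1 (ss eps eps_gt0 eps_lt).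
  split.
    apply: (in_F_of_perturb e0_gt0) => eps eps_gt0 eps_lt.
    by case: (star_ss eps eps_gt0 eps_lt).
  have e2_gt0 : 0 < e0 / 2 by rewrite divr_gt0.
  have e2_lt : e0 / 2 < e0 by lra.
  exact: coker_in_T_of_perturb e2_gt0 (star_ss _ e2_gt0 e2_lt).2.
have [e0 e0_gt0 ge0] := coker_quot_ge0_perturb inT.
exists e0; split=> // eps eps_gt0 eps_lt; apply/(star_semistableP rho nu (perturb theta eps)).
by split; [exact: in_F_perturb (ltW eps_gt0) inF | exact: ge0 (ltW eps_gt0) eps_lt].
Qed.
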